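(* Let $p$ be a prime, let $i>j\ge1$ be integers with $i$ coprime to $p$, let $u=t+u_it^{pi+1}$ and let $v=t+v_{pj}t^{pj}+\dots\in S$ (i.e. $v\equiv t+v_{pj}t^{pj}\pmod{t^{pj+1}}$), where $u_i,v_{pj}\in\mathbb F_p$ and $u_iv_{pj}\neq0$. Write $[v,u]=t+\sum_{k\ge2}\alpha_kt^k$. Then the smallest $k\equiv1\pmod p$ with $\alpha_k\neq0$ is $k=p(pj+i-1)+1$, and $\alpha_{p(pj+i-1)+1}=-i\,u_iv_{pj}$.
   Context: $S$ denotes the group, under substitution $(f\circ g)(t)=f(g(t))$, of all power series $t+\sum_{k\ge1}(a_{pk}t^{pk}+a_{pk+1}t^{pk+1})$ with coefficients in $\mathbb F_p$. The commutator is $[v,u]=v\circ u\circ v^{-1}\circ u^{-1}$. *)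

From HB Require Import structures.
From mathcomp Require Import all_boot all_order all_algebra.
Set Implicit Arguments. Unset Strict Implicit. Unset Printing Implicit Defensive.
Import GRing.Theory.
Local Open Scope ring_scope.

(* Formal power series over F_p, represented by their coefficient sequences:
   s k is the coefficient of t^k. *)
Definition ser (p : nat) := nat -> 'F_p.

Definition strunc (p : nat) (g : ser p) (n : nat) : {poly 'F_p} :=
  \poly_(m < n.+1) g m.

(* substitution (f o g)(t) = f(g(t)), for g with zero constant term:
   [t^n] f(g) = sum_{k <= n} f_k [t^n] g^k *)
Definition scomp (p : nat) (f g : ser p) : ser p :=
  fun n => \sum_(k < n.+1) f k * (strunc g n ^+ k)`_n.

Definition sid (p : nat) : ser p := fun k => (k == 1%N)%:R.

Definition inS (p : nat) (f : ser p) : Prop :=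
  f 0%N = 0 /\ f 1%N = 1 /\
  forall k, (2 <= k)%N -> f k != 0 ->
    (p <= k)%N /\ (k %% p == 0)%N || (k %% p == 1)%N.

Definition scomm (p : nat) (v u vinv uinv : ser p) : ser p :=
  scomp v (scomp u (scomp vinv uinv)).

From HB Require Import structures.
From mathcomp Require Import all_boot all_order all_algebra all_field zify ring.
Import GRing.Theory.
Local Open Scope ring_scope.

(* Work with truncations modulo t^(N+1), N = p(pj+i-1)+1, where substitution
   becomes composition of polynomials.  In characteristic p the coefficient of
   t^k, k = 1 mod p, of a series is the coefficient of t^(k-1) of its
   derivative, so it suffices to show [v,u]' = 1 - i u_i v_pj t^(N-1) mod t^N.
   With y = u^-1 and z = v^-1 o u^-1, the chain rule applied to
   [v,u] = v o u o z, v o z = y and u o y = t reduces this to two congruences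
   mod t^N:
   - v'(u(z)) = v'(z): v' only involves powers t^(pe) with e >= j, and
     u(z) - z = u_i z^(pi+1), so u(z)^p - z^p = (u(z) - z)^p has order
     p(pi+1);
   - u'(z) - u'(y) = u_i (z^(pi) - y^(pi)) = -i u_i v_pj t^(N-1): here
     z - y = -v_pj t^(pj) mod t^(pj+1), and z^p - y^p = (z - y)^p again. *)

Set Implicit Arguments.
Unset Strict Implicit.

Section PolyDivisibility.
Variable F : fieldType.
Implicit Types (d a b r P : {poly F}).

Lemma dvdp_sum (I : Type) (s : seq I) (Q : pred I) (f : I -> {poly F}) d :
  (forall k, Q k -> d %| f k) -> d %| \sum_(k <- s | Q k) f k.
Proof.
by move=> dvd_f; apply: (big_ind (fun x => d %| x)); [exact: dvdp0 | exact: dvdp_add |].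
Qed.

Lemma dvdp_sub_trans d a b c : d %| a - b -> d %| b - c -> d %| a - c.
Proof. by move=> dvd_ab dvd_bc; rewrite -[a](subrK b) -addrA dvdp_add. Qed.

Lemma dvdp_subrXX d a b m : d %| a - b -> d %| a ^+ m - b ^+ m.
Proof. by move=> dvd_ab; rewrite subrXX dvdp_mulr. Qed.

Lemma dvdp_comp_subr_exp d P a b :
  (forall m, P`_m != 0 -> d %| a ^+ m - b ^+ m) -> d %| (P \Po a) - (P \Po b).
Proof.
move=> dvd_m; rewrite !comp_polyE -sumrB; apply: dvdp_sum => m _.
rewrite -scalerBr; have [->|Pm_neq0] := eqVneq P`_m 0; first by rewrite scale0r dvdp0.
by rewrite -mul_polyC dvdp_mull ?dvd_m.
Qed.

Lemma dvdp_comp_subr d P a b : d %| a - b -> d %| (P \Po a) - (P \Po b).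
Proof. by move=> dvd_ab; apply: dvdp_comp_subr_exp => m _; apply: dvdp_subrXX. Qed.

Lemma dvdXnP n r : reflect (forall k, (k < n)%N -> r`_k = 0) ('X^n %| r).
Proof.
apply: (iffP idP) => [|r_low].
  by rewrite dvdp_eq => /eqP -> k lt_kn; rewrite coefMXn lt_kn.
rewrite -(poly_take_drop n r) dvdp_addr ?dvdp_mull //.
suff -> : take_poly n r = 0 by rewrite dvdp0.
by apply/polyP => k; rewrite coef_take_poly coef0; case: ifP => // /r_low.
Qed.

Lemma coef_dvdXn_sub n a b k : 'X^n %| a - b -> (k < n)%N -> a`_k = b`_k.
Proof. by move=> /dvdXnP dvd_ab /dvd_ab /eqP; rewrite coefB subr_eq0 => /eqP. Qed.

Lemma dvdX_coef0 r : ('X %| r) = (r`_0 == 0).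
Proof. by have := dvdp_XsubCl r 0; rewrite subr0 => ->; rewrite /root horner_coef0. Qed.

Lemma dvdXn_leq m n r : 'X^n %| r -> (m <= n)%N -> 'X^m %| r.
Proof. by move=> dvd_r le_mn; apply: dvdp_trans (dvdp_exp2l _ le_mn) dvd_r. Qed.

Lemma dvdXn_mul m n a b : 'X^m %| a -> 'X^n %| b -> 'X^(m + n) %| a * b.
Proof. by move=> dvd_a dvd_b; rewrite exprD dvdp_mul. Qed.

Lemma dvdXn_exp m k a : 'X^m %| a -> 'X^(m * k) %| a ^+ k.
Proof. by move=> dvd_a; rewrite exprM dvdp_exp2r. Qed.

Lemma dvdXn_subrXX m q k a b :
  'X^m %| a - b -> 'X^q %| a -> 'X^q %| b -> 'X^(m + q * k.-1) %| a ^+ k - b ^+ k.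
Proof.
move=> dvd_ab dvd_a dvd_b; rewrite subrXX dvdXn_mul //; apply: dvdp_sum => l _.
have lt_lk := ltn_ord l.
rewrite (_ : q * k.-1 = q * (k.-1 - l) + q * l)%N; first by rewrite dvdXn_mul ?dvdXn_exp.
by rewrite -mulnDr subnK // -ltnS prednK // (leq_ltn_trans _ lt_lk).
Qed.

Lemma dvdXn_comp n a b : 'X %| b -> 'X^n %| a -> 'X^n %| a \Po b.
Proof.
move=> dvd_b; rewrite dvdp_eq => /eqP ->.
by rewrite comp_polyM comp_Xn_poly dvdp_mull // dvdp_exp2r.
Qed.

Lemma dvdXn_comp_subl n a a' b :
  'X %| b -> 'X^n %| a - a' -> 'X^n %| (a \Po b) - (a' \Po b).
Proof. by move=> dvd_b dvd_a; rewrite -comp_polyB dvdXn_comp. Qed.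

Lemma dvdXn_deriv n r : 'X^(n.+1) %| r -> 'X^n %| r^`().
Proof.
move=> /dvdXnP r_low; apply/dvdXnP => k lt_kn.
by rewrite coef_deriv r_low ?mul0rn.
Qed.

End PolyDivisibility.

Lemma dvdXn_sum_exp (F : fieldType) q i (x y : {poly F}) :
  'X^(2 * q) %| x - 'X^q -> 'X^(2 * q) %| y - 'X^q ->
  'X^(q * i) %| \sum_(k < i) x ^+ (i.-1 - k) * y ^+ k - i%:R * 'X^(q * i.-1).
Proof.
move=> dvd_x dvd_y.
have dvdX_q (z : {poly F}) : 'X^(2 * q) %| z - 'X^q -> 'X^q %| z.
  by move=> dvd_z; rewrite -(subrK 'X^q z) dvdp_add // (dvdXn_leq dvd_z) ?leq_pmull.
have -> : i%:R * 'X^(q * i.-1) = \sum_(k < i) 'X^(q * i.-1) :> {poly F}.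
  by rewrite sumr_const card_ord mulr_natl.
rewrite -sumrB; apply: dvdp_sum => k _.
have i_gt0 : (0 < i)%N by apply: leq_ltn_trans (ltn_ord k).
set a := (i.-1 - k)%N; have ak : (a + k = i.-1)%N by rewrite subnK // -ltnS prednK.
rewrite (_ : 'X^(q * i.-1) = 'X^q ^+ a * 'X^q ^+ k); last first.
  by rewrite -!exprM -exprD -mulnDr ak.
have -> : x ^+ a * y ^+ k - 'X^q ^+ a * 'X^q ^+ k =
          (x ^+ a - 'X^q ^+ a) * y ^+ k + 'X^q ^+ a * (y ^+ k - 'X^q ^+ k) by ring.
have [dvdXq_x dvdXq_y] := (dvdX_q x dvd_x, dvdX_q y dvd_y).
rewrite dvdp_add //.
  apply: (dvdXn_leq (dvdXn_mul (dvdXn_subrXX a dvd_x dvdXq_x (dvdpp _))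
                               (dvdXn_exp k dvdXq_y))).
  nia.
apply: (dvdXn_leq (dvdXn_mul (dvdXn_exp a (dvdpp 'X^q))
                             (dvdXn_subrXX k dvd_y dvdXq_y (dvdpp _)))).
nia.
Qed.

Section PolyPrimeChar.
Variables (F : fieldType) (p : nat).
Hypothesis charFp : p \in [pchar F].

Let charFp_poly : p \in [pchar {poly F}]. Proof. by rewrite pchar_poly. Qed.

Lemma exprDp_poly (a b : {poly F}) : (a + b) ^+ p = a ^+ p + b ^+ p.
Proof. by rewrite -!(pFrobenius_autE charFp_poly) rmorphD. Qed.

Lemma exprBp_poly (a b : {poly F}) : (a - b) ^+ p = a ^+ p - b ^+ p.
Proof. by rewrite -!(pFrobenius_autE charFp_poly) rmorphB. Qed.

Lemma dvdXn_comp_subr_pchar (P a b : {poly F}) d j :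
    (forall m, (0 < m)%N -> P`_m != 0 -> (p %| m)%N && (p * j <= m)%N) ->
    'X %| a -> 'X %| b -> 'X^d %| a - b ->
  'X^(p * d + p * j.-1) %| (P \Po a) - (P \Po b).
Proof.
move=> suppP dvd_a dvd_b dvd_ab; apply: dvdp_comp_subr_exp => m Pm_neq0.
have [->|m_gt0] := posnP m; first by rewrite subrr dvdp0.
have /andP[/dvdnP[e ->] le_pj_ep] := suppP m m_gt0 Pm_neq0.
have p_gt0 : (0 < p)%N by rewrite prime_gt0 // (pcharf_prime charFp).
rewrite (mulnC e p) !exprM.
have dvd_abp : 'X^(p * d) %| a ^+ p - b ^+ p by rewrite -exprBp_poly mulnC dvdXn_exp.
apply: (dvdXn_leq (dvdXn_subrXX e dvd_abp (dvdp_exp2r p dvd_a) (dvdp_exp2r p dvd_b))).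
by move: le_pj_ep; rewrite mulnC; nia.
Qed.

Lemma dvdXn_subrX_pmul (a b : {poly F}) (c : F) n i :
    'X^2 %| a - 'X -> 'X^2 %| b - 'X -> 'X^(n.+1) %| a - b - c *: 'X^n ->
  'X^(p * (n + i)) %|
    a ^+ (p * i) - b ^+ (p * i) - (i%:R * c ^+ p) *: 'X^(p * n + p * i.-1).
Proof.
move=> dvd_a dvd_b; set G := _ - c *: _ => dvd_G.
have dvdXp (z : {poly F}) : 'X^2 %| z - 'X -> 'X^(2 * p) %| z ^+ p - 'X^p.
  by move=> dvd_z; rewrite -exprBp_poly dvdXn_exp.
pose S := \sum_(k < i) (a ^+ p) ^+ (i.-1 - k) * (b ^+ p) ^+ k.
have dvd_S : 'X^(p * i) %| S - i%:R * 'X^(p * i.-1).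
  exact: dvdXn_sum_exp (dvdXp a dvd_a) (dvdXp b dvd_b).
have dvd_S0 : 'X^(p * i.-1) %| S.
  rewrite -(subrK (i%:R * 'X^(p * i.-1)) S) dvdp_add ?dvdp_mull //.
  by rewrite (dvdXn_leq dvd_S) // leq_mul2l leq_pred orbT.
have -> : a ^+ (p * i) - b ^+ (p * i) = (a ^+ p - b ^+ p) * S by rewrite !exprM subrXX.
have -> : a ^+ p - b ^+ p = c ^+ p *: 'X^(p * n) + G ^+ p.
  by rewrite -exprBp_poly -[a - b](subrK (c *: 'X^n)) exprDp_poly exprZn mulnC exprM addrC.
rewrite -!mul_polyC rmorphM /= polyC_natr exprD.
set C := (c ^+ p)%:P; set Xpn := 'X^(p * n); set Xpi := 'X^(p * i.-1).
have -> : (C * Xpn + G ^+ p) * S - i%:R * C * (Xpn * Xpi) =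
    C * Xpn * (S - i%:R * Xpi) + G ^+ p * S by ring.
rewrite dvdp_add //; first by rewrite mulnDr exprD dvdp_mul ?dvdp_mull.
apply: (dvdXn_leq (dvdXn_mul (dvdXn_exp p dvd_G) dvd_S0)).
nia.
Qed.

End PolyPrimeChar.

Lemma dvdXn_deriv_commutator (F : fieldType) n (K V U W Y Z : {poly F}) :
    'X^(n.+1) %| (V \Po Z) - Y -> 'X^(n.+1) %| (U \Po Y) - 'X ->
    'X^(n.+1) %| W - (V \Po (U \Po Z)) ->
    'X^n %| (V^`() \Po (U \Po Z)) - (V^`() \Po Z) ->
    'X^n %| (U^`() \Po Z) - (U^`() \Po Y) - K ->
    'X^(n.-1) %| K -> 'X^2 %| Y - 'X ->
  'X^n %| W^`() - (1 + K).
Proof.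
move=> /dvdXn_deriv dVZ /dvdXn_deriv dUY /dvdXn_deriv dW dA dC dK dY.
rewrite derivB deriv_comp in dVZ; rewrite derivB deriv_comp derivX in dUY.
rewrite derivB !deriv_comp in dW.
have dY' : 'X^1 %| Y^`() - 1.
  have /dvdXnP/(_ 0%N isT) := dvdXn_deriv dY.
  by rewrite expr1 dvdX_coef0 derivB derivX !coefB => ->.
set A := V^`() \Po _ in dA dW; set B := V^`() \Po Z in dA dVZ.
set C := U^`() \Po Z in dC dW; set E := U^`() \Po Y in dC dUY.
have -> : W^`() - (1 + K) = (W^`() - A * (C * Z^`())) + (A - B) * C * Z^`()
    + (C - E - K) * B * Z^`() + E * (B * Z^`() - Y^`()) + (E * Y^`() - 1)
    + K * (B * Z^`() - Y^`()) + K * (Y^`() - 1) by ring.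
have dKY' : 'X^n %| K * (Y^`() - 1).
  by rewrite (dvdXn_leq (dvdXn_mul dK dY')) // addn1 leqSpred.
apply: dvdp_add dKY'; apply: dvdp_add (dvdp_mull _ dVZ); apply: dvdp_add dUY.
apply: dvdp_add (dvdp_mull _ dVZ); apply: dvdp_add (dvdp_mulr _ (dvdp_mulr _ dC)).
exact: dvdp_add dW (dvdp_mulr _ (dvdp_mulr _ dA)).
Qed.

Section Truncation.
Variable p : nat.
Implicit Types (f g : ser p) (r : {poly 'F_p}).

Lemma coef_strunc g N k : (strunc g N)`_k = if (k <= N)%N then g k else 0.
Proof. exact: coef_poly. Qed.

Lemma dvdX_strunc g N : g 0%N = 0 -> 'X %| strunc g N.
Proof. by move=> g0; rewrite dvdX_coef0 coef_strunc g0. Qed.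

Lemma strunc_comp f N r : strunc f N \Po r = \sum_(k < N.+1) f k *: r ^+ k.
Proof.
rewrite /strunc poly_def rmorph_sum /=; apply: eq_bigr => k _.
by rewrite linearZ /= comp_Xn_poly.
Qed.

Lemma dvdXn_strunc_sub g M N : (M <= N)%N -> 'X^(M.+1) %| strunc g N - strunc g M.
Proof.
move=> le_MN; apply/dvdXnP => k le_kM.
by rewrite coefB !coef_strunc (le_kM : k <= M)%N (leq_trans (le_kM : k <= M)%N le_MN) subrr.
Qed.

Lemma strunc_scomp f g N :
  g 0%N = 0 -> 'X^(N.+1) %| strunc (scomp f g) N - (strunc f N \Po strunc g N).
Proof.
move=> g0; apply/dvdXnP => k lt_kN.
rewrite coefB coef_strunc (lt_kN : k <= N)%N strunc_comp coef_sum /scomp.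
rewrite (big_ord_widen N.+1 (fun l => f l * (strunc g k ^+ l)`_k) lt_kN) big_mkcond.
rewrite -sumrB big1 // => l _; rewrite coefZ; case: ifPn => [le_lk | /negbTE lt_kl].
  have /dvdXnP/(_ k (ltnSn k)) := dvdp_subrXX l (dvdXn_strunc_sub g (lt_kN : k <= N)%N).
  by rewrite coefB => /eqP; rewrite subr_eq0 => /eqP ->; rewrite subrr.
have /dvdXnP -> := dvdp_exp2r l (dvdX_strunc N g0).
  by rewrite mulr0 subrr.
by rewrite ltnNge -ltnS lt_kl.
Qed.

Lemma scomp0 f g : scomp f g 0%N = f 0%N.
Proof. by rewrite /scomp big_ord1 expr0 coef1 mulr1. Qed.

Lemma strunc_sid N : (0 < N)%N -> strunc (sid p) N = 'X.
Proof.
move=> N_gt0; apply/polyP => k; rewrite coef_strunc coefX /sid.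
case: leqP => // lt_Nk; case: eqP => // k1.
by move: lt_Nk N_gt0; rewrite k1 ltnS leqNgt => /negPf ->.
Qed.

Lemma strunc_comp_inv f g N : (0 < N)%N -> g 0%N = 0 -> scomp f g = sid p ->
  'X^(N.+1) %| (strunc f N \Po strunc g N) - 'X.
Proof.
move=> N_gt0 g0 fg.
by have := strunc_scomp f N g0; rewrite fg strunc_sid // -dvdpNr opprB.
Qed.

Hypothesis p_pr : prime p.

Lemma coef_deriv_strunc g N k : (0 < k <= N)%N -> (k %% p = 1)%N ->
  ((strunc g N)^`())`_k.-1 = g k.
Proof.
move=> /andP[k_gt0 le_kN] k_mod_p.
by rewrite coef_deriv prednK // coef_strunc le_kN -mulr_natr -Fp_nat_mod // k_mod_p mulr1.
Qed.

Lemma deriv_strunc_support (v : ser p) j N :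
    inS v -> (forall k, (k < p * j)%N -> v k = (k == 1%N)%:R) ->
  forall m, (0 < m)%N -> ((strunc v N)^`())`_m != 0 ->
  (p %| m)%N && (p * j <= m)%N.
Proof.
move=> [_ [_ Sv]] v_low m m_gt0; rewrite coef_deriv coef_strunc.
case: (leqP m.+1 N) => _ vm_neq0; last by rewrite mul0rn eqxx in vm_neq0.
have v_neq0 : v m.+1 != 0 by apply: contraNneq vm_neq0 => ->; rewrite mul0rn.
have m1_mod : (m.+1 %% p = 1)%N.
  have [_ /orP[/eqP m1_mod | /eqP //]] := Sv m.+1 m_gt0 v_neq0.
  by rewrite -mulr_natr -Fp_nat_mod // m1_mod mulr0 eqxx in vm_neq0.
have -> /= : (p %| m)%N by move: m1_mod; rewrite modnS; case: ifP => // _ [/eqP].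
rewrite leqNgt; apply/negP; rewrite leq_eqVlt => /orP[/eqP m1_pj | /v_low vm1].
  by rewrite m1_pj modnMr in m1_mod.
by rewrite vm1 eqSS (gtn_eqF m_gt0) eqxx in v_neq0.
Qed.

End Truncation.

Section CommutatorTruncation.
Context {p i j : nat} {ui vpj : 'F_p} {v vinv uinv : ser p}.
Hypotheses (p_pr : prime p) (j_gt0 : (0 < j)%N) (lt_ji : (j < i)%N).
Hypotheses (Sv : inS v) (v_low : forall k, (k < p * j)%N -> v k = (k == 1%N)%:R).
Hypothesis v_pj : v (p * j)%N = vpj.
Local Notation u :=
  (fun k => if k == 1%N then 1 else if k == (p * i).+1 then ui else 0 : 'F_p).
Hypotheses (vinv0 : vinv 0%N = 0) (v_vinv : scomp v vinv = sid p).
Hypotheses (uinv0 : uinv 0%N = 0) (u_uinv : scomp u uinv = sid p).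

Local Notation N := (p * (p * j + i - 1)).+1.
Local Notation V := (strunc v N).
Local Notation U := (strunc u N).
Local Notation Y := (strunc uinv N).
Local Notation Z := (strunc vinv N \Po Y).

Let p_gt1 : (1 < p)%N := prime_gt1 p_pr.
Let pi_gt0 : (0 < p * i)%N. Proof. clear -p_gt1 j_gt0 lt_ji; nia. Qed.
Let pj_gt1 : (1 < p * j)%N. Proof. clear -p_gt1 j_gt0 lt_ji; nia. Qed.
Let pi_lt_N : (p * i < N)%N. Proof. clear -p_gt1 j_gt0 lt_ji; nia. Qed.
Let pj_le_N : (p * j <= N)%N. Proof. clear -p_gt1 j_gt0 lt_ji; nia. Qed.
Let N_pred : N.-1 = (p * (p * j) + p * i.-1)%N. Proof. clear -p_gt1 j_gt0 lt_ji; nia. Qed.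
Let N_le_pj_i : (N <= p * (p * j + i))%N. Proof. clear -p_gt1 j_gt0 lt_ji; nia. Qed.
Let N_le_pi_j : (N <= p * (p * i).+1 + p * j.-1)%N.
Proof.
clear -p_gt1 j_gt0 lt_ji.
have : (p * (i - j) <= p * p * (i - j))%N by rewrite leq_mul2r leq_pmull ?orbT //; lia.
nia.
Qed.

Lemma strunc_u : U = 'X + ui *: 'X^((p * i).+1).
Proof.
apply/polyP => k; rewrite coef_strunc coefD coefX coefZ coefXn.
have [-> | k_neq1] := eqVneq k 1%N.
  by rewrite eqSS eq_sym (gtn_eqF pi_gt0) mulr0 addr0.
have [-> | k_neq_pi1] := eqVneq k (p * i).+1; first by rewrite pi_lt_N mulr1 add0r.
by rewrite mulr0 addr0; case: ifP.
Qed.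

Lemma comp_strunc_u r : U \Po r = r + ui *: r ^+ (p * i).+1.
Proof. by rewrite strunc_u comp_polyD comp_polyX comp_polyZ comp_Xn_poly. Qed.

Let dvdX_uinv : 'X %| Y := dvdX_strunc N uinv0.
Let dvdX_vuinv : 'X %| Z := dvdXn_comp (n := 1) dvdX_uinv (dvdX_strunc N vinv0).

Lemma comp_strunc_u_uinv : 'X^(N.+1) %| (U \Po Y) - 'X.
Proof. exact: strunc_comp_inv. Qed.

Lemma comp_strunc_v_vuinv : 'X^(N.+1) %| (V \Po Z) - Y.
Proof.
rewrite comp_polyA -[X in _ - X]comp_polyX.
exact: dvdXn_comp_subl dvdX_uinv (strunc_comp_inv (ltn0Sn _) vinv0 v_vinv).
Qed.

Lemma strunc_uinv_X : 'X^2 %| Y - 'X.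
Proof.
apply: dvdp_sub_trans (dvdXn_leq comp_strunc_u_uinv _) => //.
rewrite comp_strunc_u opprD addrA subrr sub0r dvdpNr -mul_polyC dvdp_mull //.
by apply: dvdp_trans (dvdp_exp2r _ dvdX_uinv); rewrite dvdp_exp2l.
Qed.

Lemma strunc_v_pj : 'X^((p * j).+1) %| V - 'X - vpj *: 'X^(p * j).
Proof.
apply/dvdXnP => k le_k_pj; rewrite !coefB coefX coefZ coefXn coef_strunc.
rewrite (leq_trans (le_k_pj : k <= p * j)%N pj_le_N).
move: le_k_pj; rewrite ltnS leq_eqVlt => /orP[/eqP -> | lt_k_pj].
  by rewrite v_pj (gtn_eqF pj_gt1) eqxx mulr1 subr0 subrr.
by rewrite v_low // subrr (ltn_eqF lt_k_pj) mulr0 subrr.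
Qed.

Let comp_strunc_v_pj :
  'X^((p * j).+1) %| (V \Po Z) - Z - vpj *: Z ^+ (p * j).
Proof.
have := dvdXn_comp dvdX_vuinv strunc_v_pj.
by rewrite !comp_polyB comp_polyX comp_polyZ comp_Xn_poly.
Qed.

Lemma strunc_vuinv_X : 'X^2 %| Z - 'X.
Proof.
apply: dvdp_sub_trans strunc_uinv_X.
have -> : Z - Y = ((V \Po Z) - Y)
    - (((V \Po Z) - Z - vpj *: Z ^+ (p * j)) + vpj *: Z ^+ (p * j)) by ring.
apply: dvdp_sub; first by rewrite (dvdXn_leq comp_strunc_v_vuinv).
apply: dvdp_add; first by rewrite (dvdXn_leq comp_strunc_v_pj) // ltnS ltnW.
rewrite -mul_polyC dvdp_mull //.
by apply: dvdp_trans (dvdp_exp2r _ dvdX_vuinv); rewrite dvdp_exp2l.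
Qed.

Lemma strunc_vuinv_sub_uinv : 'X^((p * j).+1) %| Z - Y - (- vpj) *: 'X^(p * j).
Proof.
have -> : Z - Y - (- vpj) *: 'X^(p * j) = ((V \Po Z) - Y)
    - ((V \Po Z) - Z - vpj *: Z ^+ (p * j)) - vpj *: (Z ^+ (p * j) - 'X^(p * j)).
  by rewrite scaleNr scalerBr; ring.
apply: dvdp_sub; first apply: dvdp_sub.
- by rewrite (dvdXn_leq comp_strunc_v_vuinv).
- exact: comp_strunc_v_pj.
rewrite -mul_polyC dvdp_mull //.
have := dvdXn_subrXX (p * j) strunc_vuinv_X (dvdX_vuinv : 'X^1 %| Z)
                     (dvdpp 'X : 'X^1 %| 'X).
by rewrite mul1n add2n prednK // ltnW.
Qed.

Lemma deriv_strunc_v_comp_u : 'X^N %| (V^`() \Po (U \Po Z)) - (V^`() \Po Z).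
Proof.
have dvdX_UZ : 'X %| U \Po Z.
  by rewrite comp_strunc_u dvdp_add // -mul_polyC dvdp_mull // dvdp_exp.
have dvd_UZ_Z : 'X^((p * i).+1) %| (U \Po Z) - Z.
  by rewrite comp_strunc_u addrC addKr -mul_polyC dvdp_mull // dvdp_exp2r.
apply: (dvdXn_leq (dvdXn_comp_subr_pchar (pchar_Fp p_pr)
  (deriv_strunc_support p_pr Sv v_low) dvdX_UZ dvdX_vuinv dvd_UZ_Z) N_le_pi_j).
Qed.

Lemma deriv_strunc_u_comp_sub :
  'X^N %| (U^`() \Po Z) - (U^`() \Po Y) - (- (i%:R * ui * vpj)) *: 'X^(N.-1).
Proof.
have -> : U^`() = 1 + ui *: 'X^(p * i).
  rewrite strunc_u derivD derivX derivZ derivXn /= -scaler_nat -Fp_nat_mod //.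
  by rewrite (_ : (p * i).+1 %% p = 1)%N ?scale1r // -addn1 mulnC modnMDl modn_small.
have fermat : (- vpj) ^+ p = - vpj by rewrite -[in X in _ ^+ X](card_Fp p_pr) expf_card.
have := dvdXn_subrX_pmul (pchar_Fp p_pr) i strunc_vuinv_X strunc_uinv_X
                         strunc_vuinv_sub_uinv.
rewrite fermat -N_pred => dvd_pi.
rewrite !comp_polyD !comp_polyC !comp_polyZ !comp_Xn_poly.
have -> : 1%:P + ui *: Z ^+ (p * i) - (1%:P + ui *: Y ^+ (p * i))
    - (- (i%:R * ui * vpj)) *: 'X^(N.-1)
  = ui *: (Z ^+ (p * i) - Y ^+ (p * i) - (i%:R * - vpj) *: 'X^(N.-1)).
  by rewrite -!mul_polyC; ring.
by rewrite -mul_polyC dvdp_mull // (dvdXn_leq dvd_pi).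
Qed.

Lemma strunc_commutator :
  'X^(N.+1) %| strunc (scomm v u vinv uinv) N - (V \Po (U \Po Z)).
Proof.
have vinv_uinv0 : scomp vinv uinv 0%N = 0 by rewrite scomp0.
have dvd_uZ : 'X^(N.+1) %| strunc (scomp u (scomp vinv uinv)) N - (U \Po Z).
  apply: dvdp_sub_trans (strunc_scomp u N vinv_uinv0) _.
  exact/dvdp_comp_subr/strunc_scomp.
apply: dvdp_sub_trans (strunc_scomp v N _) (dvdp_comp_subr _ dvd_uZ).
by rewrite scomp0.
Qed.

Lemma deriv_strunc_commutator :
  'X^N %|
    (strunc (scomm v u vinv uinv) N)^`() - (1 + (- (i%:R * ui * vpj)) *: 'X^(N.-1)).
Proof.
apply: dvdXn_deriv_commutator comp_strunc_v_vuinv comp_strunc_u_uinv strunc_commutator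
  deriv_strunc_v_comp_u deriv_strunc_u_comp_sub _ strunc_uinv_X.
by rewrite -mul_polyC dvdp_mull.
Qed.

End CommutatorTruncation.

Unset Implicit Arguments.
Theorem lemma5p2 (p i j : nat) (ui vpj : 'F_p) (v vinv uinv : ser p) :
  prime p -> (j >= 1)%N -> (i > j)%N -> coprime i p ->
  ui != 0 -> vpj != 0 ->
  inS v ->
  (forall k, (k < p * j)%N -> v k = (k == 1%N)%:R) ->
  v (p * j)%N = vpj ->
  let u : ser p := fun k => if k == 1%N then 1 else if k == (p * i).+1 then ui else 0 in
  (* vinv, uinv are the inverses of v, u under substitution *)
  vinv 0%N = 0 -> scomp v vinv = sid p ->
  uinv 0%N = 0 -> scomp u uinv = sid p ->
  let alpha := scomm v u vinv uinv in
  let N := (p * (p * j + i - 1)).+1 in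
  (forall k, (2 <= k)%N -> (k < N)%N -> (k %% p == 1)%N -> alpha k = 0) /\
  alpha N = - (i%:R * ui * vpj).
Proof.
(* Coprimality and u_i v_pj != 0 only make alpha N nonzero. *)
move=> p_pr j_gt0 lt_ji _ _ _ Sv v_low v_pj u vinv0 v_vinv uinv0 u_uinv alpha N.
have dW := deriv_strunc_commutator p_pr j_gt0 lt_ji Sv v_low v_pj vinv0 v_vinv uinv0 u_uinv.
have coef_alpha k : (0 < k <= N)%N -> (k %% p = 1)%N ->
    alpha k = (k.-1 == 0%N)%:R - i%:R * ui * vpj * (k.-1 == N.-1)%:R.
  move=> k_range k_mod_p; rewrite -(coef_deriv_strunc p_pr alpha k_range k_mod_p).
  rewrite (coef_dvdXn_sub dW) ?coefD ?coef1 ?coefZ ?coefXn ?mulNr //.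
  by case/andP: k_range => k_gt0 le_kN; rewrite -ltnS prednK.
have p_gt1 := prime_gt1 p_pr.
split=> [k k_ge2 lt_kN /eqP k_mod_p | ].
  have k_gt0 : (0 < k)%N := ltnW k_ge2.
  have k_range : (0 < k <= N)%N by rewrite k_gt0 ltnW.
  have [k1_neq0 k1_neqN] : (k.-1 != 0)%N /\ (k.-1 != N.-1)%N.
    by clear -k_ge2 lt_kN; split; lia.
  by rewrite (coef_alpha k k_range k_mod_p) (negbTE k1_neq0) (negbTE k1_neqN) mulr0 subr0.
have N_mod_p : (N %% p = 1)%N by rewrite /N -addn1 mulnC modnMDl modn_small.
have N1_neq0 : (N.-1 != 0)%N by clear -p_gt1 j_gt0; rewrite /N /=; nia.
by rewrite (coef_alpha N _ N_mod_p) ?leqnn // (negbTE N1_neq0) eqxx mulr1 sub0r.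
Qed.
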